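(* Let $G$ be a connected, unweighted, undirected plane graph on $n$ vertices, and let $C=(v_1,v_2,\ldots,v_{|C|})$ be the cyclic walk of a face of $G$, partitioned into two parts $C_1=(v_1,\ldots,v_\ell)$ and $C_2=(v_{\ell+1},\ldots,v_{|C|})$. Then for any subset $C_2'$ of $C_2$, all distances in $G$ between vertices of $C_1$ and vertices of $C_2'$ can be encoded in $\tilde{O}(|C_1|+|C_2'|)$ bits; that is, there is a bit string of that length from which $d_G(v_i,v_p)$ can be recovered for every $v_i\in C_1$ and $v_p\in C_2'$ (given the positions $i$ and $p$).
   Context: $d_G$ denotes shortest-path (hop) distance in $G$. $\tilde{O}(\cdot)$ hides factors polylogarithmic in $n$. A plane graph is a planar graph with a fixed embedding; the cyclic walk of a face is the closed walk along its boundary. *)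

(* Plane graphs are represented by combinatorial maps
   (rotation systems) of genus 0. *)
From mathcomp Require Import all_boot fingroup perm.
Set Implicit Arguments. Unset Strict Implicit. Unset Printing Implicit Defensive.

Section PlaneGraph.
Variables (V D : finType) (tl : D -> V) (alpha sigma : {perm D}).

(* Darts: D, dart d leaves vertex [tl d]; [alpha] pairs the two
   darts of an edge; [sigma] is the rotation (cyclic order of darts) around
   each vertex.  The face permutation maps d to the next dart of its face. *)
Definition phi (d : D) : D := sigma (alpha d).

Definition head (d : D) : V := tl (alpha d).

Definition is_rotation_system : Prop :=
  [/\ forall d, alpha (alpha d) = d,
      forall d, alpha d != d,
      forall d, tl (sigma d) = tl d &
      forall d d', tl d = tl d' -> fconnect sigma d d'].

Definition simple_map : Prop :=
  (forall d, tl d != head d) /\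
  (forall d d', tl d = tl d' -> head d = head d' -> d = d').

Definition adj : rel V := fun u v => [exists d, (tl d == u) && (head d == v)].

Definition connected_graph : Prop := forall u v : V, connect adj u v.

Definition n_edges : nat := #|D| %/ 2.
Definition n_faces : nat := fcard phi D.

(* genus 0 (Euler's formula); an edgeless connected graph (one vertex) is
   trivially plane *)
Definition planar_map : Prop :=
  #|D| = 0 \/ #|V| + n_faces = n_edges + 2.

Definition plane_graph : Prop :=
  [/\ is_rotation_system, simple_map, connected_graph & planar_map].

(* hop distance d_G: least k such that v is within k steps of u
   (returns #|V| if v is unreachable, which never happens for connected G) *)
Definition ball (k : nat) (u : V) : {set V} :=
  iter k (fun S => S :|: [set y | [exists x in S, adj x y]]) [set u].

Definition dist (u v : V) : nat :=
  find (fun k => v \in ball k u) (iota 0 #|V|).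

(* the cyclic walk of the face containing dart d: v_1, ..., v_|C|,
   here 0-indexed: face_vertex d j = v_(j+1) for j < face_length d *)
Definition face_length (d : D) : nat := fingraph.order phi d.
Definition face_vertex (d : D) (j : nat) : V := tl (iter j phi d).

End PlaneGraph.

From Pilot Require Import Defs.
From mathcomp Require Import all_boot fingroup perm zify.
Set Implicit Arguments. Unset Strict Implicit. Unset Printing Implicit Defensive.

(* A plane graph given by a rotation system (alpha, sigma) is a connected map of
   genus 0: Euler's inequality  c(alpha) + c(sigma) + c(alpha sigma) <= |D| + 2
   (c = number of cycles) holds with equality.  Hence two walks joining
   interleaved pairs of darts of one face must meet: contracting the first walk
   to a single vertex and then splitting that vertex and the face apart would
   produce a connected map violating the inequality.  Exchanging the halves of
   two crossing shortest walks gives the Monge inequality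
   d(v_i, v_p') + d(v_i', v_p) <= d(v_i, v_p) + d(v_i', v_p')  for i < i' < p < p'.
   Consecutive rows of the distance matrix between C_1 and C_2' differ by at most
   one in each entry, and by the Monge inequality the entries where a row goes
   down form a prefix of C_2' and those where it goes up a suffix; so the first
   row and two thresholds per row, each written with O(log n) bits, determine
   the whole matrix. *)

(** * Cycles of permutations and Euler's inequality *)

Lemma connect_preserved (T : finType) (r : rel T) (S : pred T) u w :
  (forall v v', S v -> r v v' -> S v') -> S u -> connect r u w -> S w.
Proof.
move=> rS uS /connectP[s]; elim: s u uS => [|v s IH] u uS /=; first by move=> _ ->.
by case/andP => ruv sv lw; exact: (IH v (rS _ _ uS ruv) sv lw).
Qed.

Section PermCycles.
Variable D : finType.
Implicit Types (p e n : {perm D}) (r : rel D) (x y u v w : D).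

Definition ncycles p := #|porbits p|.

Lemma ncycles_mul_tperm p x y :
  ncycles (p * tperm x y)%g + (x \notin porbit p y).*2 = ncycles p + (x != y).
Proof.
rewrite /ncycles -porbitsV invMg tpermV -(porbitsV p) -porbitV.
exact: porbits_mul_tperm.
Qed.

Lemma porbit_fconnect p x y : (y \in porbit p x) = fconnect p x y.
Proof.
apply/porbitP/idP => [[i ->]|]; first by rewrite permX fconnect_iter.
by move/iter_findex => <-; exists (findex p x y); rewrite permX.
Qed.

Lemma porbit_trans p u v w :
  v \in porbit p u -> w \in porbit p v -> w \in porbit p u.
Proof. by rewrite -eq_porbit_mem => /eqP ->. Qed.

Lemma porbit_eq p u v : v \in porbit p u -> porbit p v = porbit p u.
Proof. by rewrite -eq_porbit_mem => /eqP. Qed.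

Lemma porbit_fixed p a b : p a = a -> b \in porbit p a -> b = a.
Proof.
move=> pa /porbitP[i ->]; elim: i => [|i IH]; first by rewrite expg0 perm1.
by rewrite expgSr permM IH.
Qed.

Lemma ncycles1 : ncycles 1%g = #|D|.
Proof.
have E : porbit (1%g : {perm D}) =1 @set1 D.
  by move=> x; apply/setP => y; rewrite inE; apply/porbitP/eqP => [[i ->]|->];
    [rewrite expg1n perm1 | exists 0; rewrite expg0 perm1].
by rewrite /ncycles /porbits (eq_imset _ E) card_imset //; exact: set1_inj.
Qed.

Lemma porbitsT p : porbits p = porbit p @: [set: D].
Proof. by apply/setP => C; apply/imsetP/imsetP => [[x _ ->]|[x _ ->]]; exists x. Qed.

Lemma ncycles_fcard p : ncycles p = fcard p D.
Proof.
have sym : connect_sym (frel p) := fconnect_sym (@perm_inj _ p).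
rewrite /ncycles /n_comp_mem.
have -> : porbits p = porbit p @: [set x | froots p x].
  apply/setP => C; apply/imsetP/imsetP => [[x _ ->]|[x _ ->]]; last by exists x.
  exists (froot p x); first by rewrite inE /roots root_root.
  apply/eqP; rewrite eq_porbit_mem porbit_fconnect.
  by rewrite sym connect_root.
rewrite card_in_imset.
  by apply: eq_card => x; rewrite !inE andbT.
move=> x y; rewrite !inE => /eqP rx /eqP ry /eqP.
rewrite eq_porbit_mem porbit_fconnect => /(rootP sym).
by rewrite rx ry.
Qed.

Definition map_rel e n : rel D := fun u w => (w == e u) || (w == n u).

Lemma fconnect_sub_connect r p :
  (forall u, r u (p u)) -> forall u w, fconnect p u w -> connect r u w.
Proof. by move=> rp; apply: connect_sub => u w /eqP <-; exact/connect1. Qed.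

Lemma porbit_map_rel e n u w : w \in porbit n u -> connect (map_rel e n) u w.
Proof.
by rewrite porbit_fconnect; apply: fconnect_sub_connect => v; rewrite /map_rel eqxx orbT.
Qed.

Lemma fconnect_mul_map_rel e n u w :
  fconnect (e * n)%g u w -> connect (map_rel e n) u w.
Proof.
apply: connect_sub => v _ /eqP <-; rewrite permM.
by apply: (@connect_trans _ _ (e v)); apply: connect1; rewrite /map_rel eqxx ?orbT.
Qed.

Lemma map_rel_sym e n : connect_sym (map_rel e n).
Proof.
have back p u : (forall v, map_rel e n v (p v)) -> connect (map_rel e n) (p u) u.
  move=> ep; apply: fconnect_sub_connect ep _ _ _.
  by rewrite fconnect_sym ?fconnect1 //; exact: perm_inj.
suff H u w : connect (map_rel e n) u w -> connect (map_rel e n) w u.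
  by move=> u w; apply/idP/idP; apply: H.
case/connectP => s; elim: s u => [|v s IH] u /=; first by move=> _ ->.
case/andP => /orP[] /eqP -> sv wE; apply: connect_trans (IH _ sv wE) _;
  by apply: back => z; rewrite /map_rel eqxx ?orbT.
Qed.

Definition rclass r u := [set w | connect r u w].
Definition nclasses r := #|[set rclass r u | u : D]|.
Definition ncomp e n := nclasses (map_rel e n).

Lemma rclass_eq r u w : connect_sym r -> connect r u w -> rclass r u = rclass r w.
Proof. by move=> sym H; apply/setP => v; rewrite !inE (same_connect sym H). Qed.

Lemma eq_nclasses r1 r2 : connect r1 =2 connect r2 -> nclasses r1 = nclasses r2.
Proof.
move=> E; suff Ec : rclass r1 =1 rclass r2 by rewrite /nclasses (eq_imset _ Ec).
by move=> u; apply/setP => w; rewrite !inE E.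
Qed.

Lemma leq_card_imset_coarser (T T' : finType) (A : {set D}) (f : D -> T) (g : D -> T') :
  {in A &, forall u v, g u = g v -> f u = f v} -> #|f @: A| <= #|g @: A|.
Proof.
move=> fg; case: (set_0Vmem A) => [->|[x0 _]]; first by rewrite imset0 cards0.
pose h (C : T') := oapp f (f x0) [pick u in A | g u == C].
suff -> : f @: A = h @: (g @: A) by exact: leq_imset_card.
apply/setP => C; apply/imsetP/imsetP => [[u uA ->]|[C' /imsetP[u uA ->] ->]].
  exists (g u); first exact: imset_f.
  rewrite /h; case: pickP => [u' /andP[u'A /eqP gu]|/(_ u)]; last by rewrite uA eqxx.
  by rewrite /= (fg u' u).
rewrite /h; case: pickP => [u' /andP[u'A /eqP gu]|/(_ u)]; last by rewrite uA eqxx.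
by exists u'.
Qed.

Lemma nclasses_add_edge r1 r2 x y :
  connect_sym r1 ->
  (forall u w, r2 u w -> [\/ connect r1 u w,
     connect r1 u x /\ connect r1 y w | connect r1 u y /\ connect r1 x w]) ->
  nclasses r1 <= (nclasses r2).+1.
Proof.
move=> sym r2E.
pose A := [set u | ~~ connect r1 x u].
have r2_from_A u w : u \in A -> connect r2 u w ->
    connect r1 u w \/ (connect r1 u y /\ connect r1 x w).
  rewrite inE => nxu /connectP [s]; elim/last_ind: s w => [|s v IH] w /=.
    by move=> _ ->; left; exact: connect0.
  rewrite rcons_path last_rcons => /andP[ss /r2E r2v] lw; subst w.
  case: (IH _ ss erefl) r2v => [k|[k1 k2]] [h|[h1 h2]|[h1 h2]].
  - by left; apply: connect_trans k h.
  - by case/negP: nxu; rewrite sym; apply: connect_trans k h1.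
  - by right; split=> //; apply: connect_trans k h1.
  - by right; split=> //; apply: connect_trans k2 h.
  - by left; apply: connect_trans k1 h2.
  - by right.
have r2_in_A u w : u \in A -> w \in A -> connect r2 u w -> connect r1 u w.
  move=> uA wA /(r2_from_A _ _ uA) [//|[_ k]].
  by move: wA; rewrite inE k.
have sub : [set rclass r1 u | u : D] \subset rclass r1 x |: (rclass r1 @: A).
  apply/subsetP => C /imsetP[u _ ->]; rewrite !inE.
  case: (boolP (u \in A)) => uA; first by rewrite imset_f ?orbT.
  by move: uA; rewrite inE negbK => k; rewrite (rclass_eq sym k) eqxx.
rewrite /nclasses (leq_trans (subset_leq_card sub)) // cardsU1 -add1n.
rewrite leq_add ?leq_b1 //.
apply: (leq_trans (leq_card_imset_coarser (g := rclass r2) _)).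
  move=> u w uA wA e; apply: rclass_eq => //; apply: r2_in_A => //.
  have : w \in rclass r2 w by rewrite inE connect0.
  by rewrite -e inE.
by apply: subset_leq_card; apply: imsetS; apply/subsetP.
Qed.

Lemma ncomp_perm1 e : ncomp e 1%g = ncycles e.
Proof.
rewrite /ncomp /nclasses /ncycles /porbits.
suff E : rclass (map_rel e 1) =1 porbit e by rewrite (eq_imset _ E).
move=> u; apply/setP => w; rewrite inE porbit_fconnect; apply/idP/idP.
  apply: connect_sub => v v' /orP[] /eqP ->; first exact: fconnect1.
  by rewrite perm1 connect0.
by apply: fconnect_sub_connect => v; rewrite /map_rel eqxx.
Qed.

Lemma map_rel_mul_tperm e n x y u w : map_rel e (n * tperm x y)%g u w ->
  [\/ map_rel e n u w, map_rel e n u x /\ w = y | map_rel e n u y /\ w = x].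
Proof.
case/orP => /eqP ->; first by constructor 1; rewrite /map_rel eqxx.
rewrite permM; case: tpermP => [nu|nu|_ _].
- by constructor 2; rewrite /map_rel -nu eqxx orbT.
- by constructor 3; rewrite /map_rel -nu eqxx orbT.
- by constructor 1; rewrite /map_rel eqxx orbT.
Qed.

Lemma connect_map_rel_mul_tperm e n x y u w :
  connect (map_rel e n) x y ->
  connect (map_rel e (n * tperm x y)%g) u w -> connect (map_rel e n) u w.
Proof.
move=> cxy; apply: connect_sub => v v' /map_rel_mul_tperm[h|[h ->]|[h ->]].
- exact: connect1.
- exact: connect_trans (connect1 h) cxy.
- by apply: connect_trans (connect1 h) _; rewrite map_rel_sym.
Qed.

(* Euler's inequality for the hypermap [(e, n)]: its genus is nonnegative.
   By induction on the support of [n], splitting off one point at a time. *)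
Lemma ncycles_genus_ineq e n :
  ncycles e + ncycles n + ncycles (e * n)%g <= #|D| + (ncomp e n).*2.
Proof.
have [m] := ubnP #|[pred z | n z != z]|; elim: m n => // m IHm n /ltnSE le_nm.
case: (pickP (fun z => n z != z)) => [x nx | nid]; last first.
  have -> : n = 1%g.
    by apply/permP => z; apply/eqP; rewrite perm1; move/negbFE: (nid z).
  by rewrite ncycles1 ncomp_perm1 mulg1; lia.
set y := n x; set n2 := (n * tperm x y)%g.
have n_n2 : n = (n2 * tperm x y)%g by rewrite /n2 -mulgA tperm2 mulg1.
have le2 : #|[pred z | n2 z != z]| < m.
  rewrite (cardD1 x) !inE nx in le_nm; apply: leq_ltn_trans le_nm.
  apply: subset_leq_card; apply/subsetP=> z; rewrite !inE permM.
  have [-> | zx] := eqVneq z x; first by rewrite tpermR eqxx.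
  apply: contra => /eqP nz; rewrite nz tpermD // 1?eq_sym //.
  by apply: contra_neq zx => yz; apply: (@perm_inj _ n); rewrite nz -/y yz.
have IH := IHm n2 le2.
have c1 : ncycles n2 = (ncycles n).+1.
  have := ncycles_mul_tperm n x y.
  by rewrite porbit_sym porbit_fconnect fconnect1 eq_sym nx addn0 addn1.
have c2 : ncycles (e * n)%g + (x \notin porbit (e * n2)%g y).*2 = (ncycles (e * n2)%g).+1.
  by rewrite {1}n_n2 mulgA ncycles_mul_tperm eq_sym nx addn1.
case: (boolP (connect (map_rel e n2) x y)) => cxy.
  have -> : ncomp e n = ncomp e n2.
    apply: eq_nclasses => u w; apply/idP/idP; last first.
      by apply: connect_map_rel_mul_tperm; apply: connect1; rewrite /map_rel eqxx orbT.
    by rewrite {1}n_n2 => /(connect_map_rel_mul_tperm cxy).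
  by lia.
have nxy : x \notin porbit (e * n2)%g y.
  by apply: contra cxy; rewrite porbit_fconnect map_rel_sym => /fconnect_mul_map_rel.
have : ncomp e n2 <= (ncomp e n).+1.
  apply: (nclasses_add_edge (x := x) (y := y)) (map_rel_sym _ _) _ => u w.
  rewrite {1}n_n2 => /map_rel_mul_tperm[h|[h ->]|[h ->]].
  - by constructor 1; exact: connect1.
  - by constructor 2; split; [exact: connect1 | exact: connect0].
  - by constructor 3; split; [exact: connect1 | exact: connect0].
by rewrite nxy in c2; lia.
Qed.
End PermCycles.

Section TpermOrbits.
Variable D : finType.
Implicit Types (p : {perm D}) (x y u v w : D).

Lemma porbit_mul_tperm_merge p x y :
  x \notin porbit p y -> x \in porbit (p * tperm x y)%g y.
Proof.
move=> nxy; have xy : x != y by apply: contraNneq nxy => ->; exact: porbit_id.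
have := ncycles_mul_tperm p x y; have := ncycles_mul_tperm (p * tperm x y)%g x y.
rewrite -mulgA tperm2 mulg1 nxy xy.
by case: (x \in _) => //=; lia.
Qed.

Lemma porbit_sub_mul_tperm p x y u :
  x \in porbit (p * tperm x y)%g y -> porbit p u \subset porbit (p * tperm x y)%g u.
Proof.
move=> xy; apply/subsetP => w; rewrite !porbit_fconnect.
apply: connect_sub => v _ /eqP <-.
have -> : p v = tperm x y ((p * tperm x y)%g v) by rewrite permM tpermK.
case: tpermP => [e1|e2|_ _]; last exact: fconnect1.
- apply: (@connect_trans _ _ x); first by apply: connect1; rewrite /= e1.
  by rewrite -porbit_fconnect porbit_sym.
- apply: (@connect_trans _ _ y); first by apply: connect1; rewrite /= e2.
  by rewrite -porbit_fconnect.
Qed.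

Lemma porbit_mul_tperm_sub p x y w :
  x \notin porbit p w -> y \notin porbit p w ->
  porbit (p * tperm x y)%g w \subset porbit p w.
Proof.
move=> nx ny; apply/subsetP => z; rewrite porbit_fconnect.
apply: (connect_preserved (S := mem (porbit p w))); last exact: porbit_id.
move=> v _ vw /eqP <-; rewrite permM.
have pv : p v \in porbit p w by apply: porbit_trans vw _; rewrite porbit_fconnect fconnect1.
by rewrite tpermD //; [apply: contraNneq nx => -> | apply: contraNneq ny => ->].
Qed.

Lemma porbit_mul_tperm_out p x y w :
  x \notin porbit p w -> y \notin porbit p w ->
  porbit (p * tperm x y)%g w = porbit p w.
Proof.
move=> nx ny; apply/eqP; rewrite eqEsubset porbit_mul_tperm_sub //=.
have S := porbit_mul_tperm_sub nx ny.
rewrite -{1}[p](mulgK (tperm x y)) tpermV.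
by apply: porbit_mul_tperm_sub; [move: nx | move: ny]; apply: contra => /(subsetP S).
Qed.

(* [p * tperm x (p x)] cuts [x] out of its cycle. *)
Lemma porbit_mul_tperm_cut p x u w : u != x -> w != x -> w \in porbit p u ->
  w \in porbit (p * tperm x (p x))%g u.
Proof.
move=> ux wx; rewrite !porbit_fconnect => /iter_findex wE; rewrite -wE in wx *.
move: (findex p u w) wx => i; set q := (p * tperm x (p x))%g.
have qE v : v != x -> p v != x -> q v = p v.
  move=> vx pvx; rewrite permM tpermD //; first by rewrite eq_sym.
  by rewrite (inj_eq perm_inj) eq_sym.
have [N] := ubnP i; elim: N i => // N IHN [|i] /ltnSE lt hi; first exact: connect0.
case: (eqVneq (iter i p u) x) => vx.
  case: i lt hi vx IHN => [|j] lt hi vx IHN; first by move: ux; rewrite -vx /= eqxx.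
  have v0x : iter j p u != x.
    apply: contraNneq hi => e.
    have px : p x = x by rewrite -{1}e -iterS vx.
    by rewrite iterS vx px.
  apply: (@connect_trans _ _ (iter j p u)); first exact: IHN (ltnW lt) v0x.
  by apply: connect1; rewrite /= permM -iterS vx tpermL -vx iterS.
apply: (@connect_trans _ _ (iter i p u)); first exact: IHN _ vx.
by apply: connect1; rewrite /= qE // -iterS.
Qed.

Lemma tperm_tperm_if x y a c v : x != c -> x != y -> a != c -> (x == a -> y != c) ->
  tperm (if x == a then y else a) c (tperm x y v) = tperm x (tperm a c y) (tperm a c v).
Proof.
move=> xc xy ac yc.
case: (eqVneq x a) yc ac => [<-{a} /(_ erefl) yc _ | xa _ ac].
  rewrite [tperm x c y]tpermD //; last by rewrite eq_sym.
  by do !case: tpermP => //; move=> *; subst; rewrite ?eqxx in xc xy yc *.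
by do !case: tpermP => //; move=> *; subst; rewrite ?eqxx in xc xy ac xa *.
Qed.
End TpermOrbits.

Section FaceSplit.
Variable D : finType.
Implicit Types (p : {perm D}) (a b c e x : D).

(* [p * tperm a c] splits the cycle of [p] through [a] and [c] into an [a]-side
   and a [c]-side; cutting [x] out of its cycle keeps [b] and [e] on their sides. *)
Lemma split_side_mul_tperm_cut p a b c e x :
  let a' := if x == a then p x else a in let p' := (p * tperm x (p x))%g in
  a != c -> b != a -> x != c -> x != b -> x != e -> p x != x ->
  c \in porbit p a -> b \in porbit (p * tperm a c)%g a ->
  e \in porbit (p * tperm a c)%g c ->
  [/\ a' != c, c \in porbit p' a', b \in porbit (p' * tperm a' c)%g a'
    & e \in porbit (p' * tperm a' c)%g c].
Proof.
move=> a' p' ac ba xc xb xe pxx cp bpsi epsi.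
set psi := (p * tperm a c)%g in bpsi epsi.
have pac : x == a -> p x != c.
  move=> /eqP xa; apply: contra_neq ba => pxc.
  have psia : psi a = a by rewrite /psi permM -xa pxc tpermR xa.
  exact: porbit_fixed psia bpsi.
have a'c : a' != c by rewrite /a'; case: (eqVneq x a) => // /eqP /pac.
have a'x : a' != x by rewrite /a'; case: (eqVneq x a) => [_|xa]; rewrite // eq_sym.
have a'p : a' \in porbit p a.
  rewrite /a'; case: (eqVneq x a) => [<-|_]; last exact: porbit_id.
  by rewrite porbit_fconnect fconnect1.
have a'psi : a' \in porbit psi a.
  rewrite /a'; case: (eqVneq x a) => [xa|_]; last exact: porbit_id.
  rewrite porbit_fconnect; apply: connect1; rewrite /= /psi permM -xa tpermD //.
    by rewrite eq_sym.
  by rewrite eq_sym pac // xa.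
have psiE : (p' * tperm a' c)%g = (psi * tperm x (psi x))%g.
  apply/permP => z; rewrite /psi /p' !permM.
  by apply: tperm_tperm_if; rewrite // eq_sym.
split=> //; rewrite ?psiE; apply: porbit_mul_tperm_cut => //;
  by rewrite 1?eq_sym ?(porbit_eq a'p) ?(porbit_eq a'psi).
Qed.
End FaceSplit.

(** * Crossing walks in maps of genus 0 *)

Section MapWalks.
Variables (D : finType) (al : {perm D}).
Implicit Types (sg : {perm D}) (a b c e g u v w x y z : D) (A B P Q : seq D).

Definition map_connected sg := forall u w, connect (map_rel al sg) u w.

Definition genus0 sg :=
  ncycles al + ncycles sg + ncycles (al * sg)%g = #|D| + 2 /\ map_connected sg.

(* Vertices are the [sg]-cycles; the walk leaves the vertex of [u] along the
   darts of [P] in turn and arrives at the vertex of [w]. *)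
Fixpoint map_walk sg u P w : bool :=
  if P is g :: P' then (g \in porbit sg u) && map_walk sg (al g) P' w
  else w \in porbit sg u.

Definition walk_darts u P w := [:: u, w & P ++ map al P].

Definition vertex_disjoint sg A B :=
  forall z w, z \in A -> w \in B -> w \notin porbit sg z.

Lemma map_walk_connect sg u P w : map_walk sg u P w -> connect (map_rel al sg) u w.
Proof.
elim: P u => [|g P IH] u /=; first exact: porbit_map_rel.
case/andP => /(porbit_map_rel al) ug /IH; apply: connect_trans.
by apply: connect_trans ug _; apply: connect1; rewrite /map_rel eqxx.
Qed.

Lemma map_walk_start sg u v P w :
  v \in porbit sg u -> map_walk sg v P w -> map_walk sg u P w.
Proof.
case: P => [|g P] /= vu; first exact: porbit_trans.
by case/andP => /(porbit_trans vu) -> ->.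
Qed.

Lemma map_walk_mono sg sg' u P w :
  (forall z, z \in u :: map al P -> porbit sg z \subset porbit sg' z) ->
  map_walk sg u P w -> map_walk sg' u P w.
Proof.
elim: P u => [|g P IH] u /= sub; first by move/(subsetP (sub u (mem_head _ _))).
case/andP => /(subsetP (sub u (mem_head _ _))) -> /IH -> // z zP.
by apply: sub; rewrite inE zP orbT.
Qed.

Lemma ncomp_le1 sg : map_connected sg -> ncomp al sg <= 1.
Proof.
move=> conn; apply/card_le1P => X /imsetP[u _ ->] Y.
rewrite !inE; apply/imsetP/eqP => [[v _ ->]|->]; last by exists u.
exact/rclass_eq/conn/map_rel_sym.
Qed.

Lemma vertex_disjoint_neq sg A B u w :
  vertex_disjoint sg A B -> u \in A -> w \in B -> u != w.
Proof. by move=> disj uA wB; apply: contraNneq (disj _ _ uA wB) => <-; exact: porbit_id. Qed.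

Lemma vertex_disjoint_sub sg A A' B :
  {subset A' <= A} -> vertex_disjoint sg A B -> vertex_disjoint sg A' B.
Proof. by move=> sub disj z w /sub; exact: disj. Qed.

Lemma vertex_disjoint_cons sg A B u v :
  u \in A -> v \in porbit sg u -> vertex_disjoint sg A B -> vertex_disjoint sg (v :: A) B.
Proof.
move=> uA vu disj z w; rewrite inE => /orP[/eqP -> wB|]; last exact: disj.
apply: contra (disj _ _ uA wB) => wv; exact: porbit_trans vu wv.
Qed.

Lemma vertex_disjoint_mul_tperm sg x y A B :
  vertex_disjoint sg [:: x, y & A] B -> vertex_disjoint (sg * tperm x y)%g [:: x, y & A] B.
Proof.
move=> disj z w zA wB; rewrite porbit_sym porbit_mul_tperm_out.
- by rewrite porbit_sym; exact: disj.
- by rewrite porbit_sym; apply: disj; rewrite ?mem_head.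
- by rewrite porbit_sym; apply: disj; rewrite // !inE eqxx orbT.
Qed.

Lemma genus0_mul_tperm sg x : let y := (al * sg)%g x in
  genus0 sg -> x \notin porbit sg y -> genus0 (sg * tperm x y)%g.
Proof.
move=> y [euler conn] xy; have x_y : x != y by apply: contraNneq xy => ->; exact: porbit_id.
have yx : x \in porbit (al * sg)%g y by rewrite porbit_sym porbit_fconnect fconnect1.
have c_sg : ncycles (sg * tperm x y)%g + 2 = (ncycles sg).+1.
  by have := ncycles_mul_tperm sg x y; rewrite xy x_y addn1.
have c_phi : ncycles (al * (sg * tperm x y))%g = (ncycles (al * sg)%g).+1.
  by rewrite mulgA; have := ncycles_mul_tperm (al * sg)%g x y; rewrite yx x_y addn0 addn1.
split; first by lia.
move=> u w; apply: connect_sub (conn u w) => v _ /orP[] /eqP ->.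
  by apply: connect1; rewrite /map_rel eqxx.
apply: porbit_map_rel; apply: (subsetP (porbit_sub_mul_tperm _ _)).
  exact: porbit_mul_tperm_merge.
by rewrite porbit_fconnect fconnect1.
Qed.

Lemma map_walk_contract sg a g P c : let y := (al * sg)%g g in
  g \in porbit sg a -> g \notin porbit sg y -> map_walk sg (al g) P c ->
  map_walk (sg * tperm g y)%g (if g == a then y else a) P c.
Proof.
move=> y ga gy wP; set sg' := (sg * tperm g y)%g.
have gy' : g \in porbit sg' y := porbit_mul_tperm_merge gy.
have sub u : porbit sg u \subset porbit sg' u := porbit_sub_mul_tperm u gy'.
have yag : y \in porbit sg (al g) by rewrite /y permM porbit_fconnect fconnect1.
apply: (map_walk_start (v := al g)); last by apply: map_walk_mono wP => z _; exact: sub.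
apply: (@porbit_trans _ _ _ g).
  by case: eqVneq => _; [exact: gy' | exact: (subsetP (sub a))].
apply: (@porbit_trans _ _ _ y); first by rewrite porbit_sym.
by rewrite porbit_sym; apply: (subsetP (sub (al g))).
Qed.

Lemma walk_darts_vertices u P w : {subset u :: map al P <= walk_darts u P w}.
Proof.
by move=> z; rewrite inE /walk_darts !inE mem_cat => /orP[->|->]; rewrite ?orbT.
Qed.

(* Splitting both the vertex and the face through [a] and [c] raises the Euler
   sum by two, so the new map must be disconnected; but the walk from [b] to [e]
   still joins the two sides. *)
Lemma crossing_base sg a b c e A Q :
  genus0 sg -> a != c -> c \in porbit sg a -> c \in porbit (al * sg)%g a ->
  b \in porbit (al * sg * tperm a c)%g a -> e \in porbit (al * sg * tperm a c)%g c ->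
  map_walk sg b Q e -> ~ vertex_disjoint sg (a :: A) (walk_darts b Q e).
Proof.
move=> [euler conn] ac csg cphi bpsi epsi wQ disj.
set sg' := (sg * tperm a c)%g.
have c_sg : ncycles sg' = (ncycles sg).+1.
  by have := ncycles_mul_tperm sg a c; rewrite porbit_sym csg ac addn0 addn1.
have c_phi : ncycles (al * sg')%g = (ncycles (al * sg)%g).+1.
  rewrite mulgA; have := ncycles_mul_tperm (al * sg)%g a c.
  by rewrite porbit_sym cphi ac addn0 addn1.
rewrite -mulgA -/sg' !porbit_fconnect in bpsi epsi.
have Q_sg' z : z \in b :: map al Q -> porbit sg z \subset porbit sg' z.
  move/walk_darts_vertices => /(_ e) zQ.
  have az : a \notin porbit sg z by rewrite porbit_sym; apply: disj; rewrite ?mem_head.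
  rewrite porbit_mul_tperm_out //; apply: contra az => cz.
  by apply: porbit_trans cz _; rewrite porbit_sym.
have ac' : connect (map_rel al sg') a c.
  apply: connect_trans (fconnect_mul_map_rel bpsi) _.
  apply: connect_trans (map_walk_connect (map_walk_mono Q_sg' wQ)) _.
  by rewrite map_rel_sym; apply: fconnect_mul_map_rel.
have conn' : map_connected sg'.
  move=> u w; apply: (connect_map_rel_mul_tperm ac').
  by rewrite -mulgA tperm2 mulg1; apply: conn.
have := ncycles_genus_ineq al sg'; have := ncomp_le1 conn'; lia.
Qed.

(* Induction on [P]: its first edge is contracted by merging its two end
   vertices, which keeps the map of genus 0 and the four darts in the same
   cyclic configuration. *)
Lemma crossing sg a b c e P Q :
  genus0 sg -> a != c -> c \in porbit (al * sg)%g a ->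
  b \in porbit (al * sg * tperm a c)%g a -> e \in porbit (al * sg * tperm a c)%g c ->
  map_walk sg a P c -> map_walk sg b Q e ->
  ~ vertex_disjoint sg (walk_darts a P c) (walk_darts b Q e).
Proof.
elim: P sg a => [|g P IH] sg a G0 ac cphi bpsi epsi wP wQ;
  have [csg|ncsg] := boolP (c \in porbit sg a);
  try exact: crossing_base G0 ac csg cphi bpsi epsi wQ.
  by rewrite /= (negbTE ncsg) in wP.
move=> disj; case/andP: wP => ga wP.
have sub_gP : {subset walk_darts a P c <= walk_darts a (g :: P) c}.
  by move=> z; rewrite /walk_darts /= !(inE, mem_cat) => /or3P[->|->|/orP[->|->]];
    rewrite ?orbT.
case: (boolP (al g \in porbit sg a)) => aga.
  exact: IH G0 ac cphi bpsi epsi (map_walk_start aga wP) wQ (vertex_disjoint_sub sub_gP disj).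
set y := (al * sg)%g g; set sg' := (sg * tperm g y)%g.
have ysg : y \in porbit sg (al g) by rewrite /y permM porbit_fconnect fconnect1.
have gy : g \notin porbit sg y.
  apply: contra aga => gy; apply: porbit_trans ga _.
  by apply: (@porbit_trans _ _ _ y); rewrite porbit_sym.
have disj_gy : vertex_disjoint sg [:: g, y & walk_darts a (g :: P) c] (walk_darts b Q e).
  apply: (vertex_disjoint_cons (u := a)) ga _; first by rewrite !inE eqxx orbT.
  apply: (vertex_disjoint_cons (u := al g)) ysg disj.
  by apply: walk_darts_vertices; rewrite !inE eqxx orbT.
have bQ : b \in walk_darts b Q e := mem_head _ _.
have eQ : e \in walk_darts b Q e by rewrite !inE eqxx orbT.
have ba : b != a by rewrite eq_sym (vertex_disjoint_neq disj (mem_head _ _) bQ).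
have gc : g != c by apply: contraNneq ncsg => <-.
have yg : y != g by apply: contraNneq gy => ->; exact: porbit_id.
have [] := split_side_mul_tperm_cut ac ba gc (vertex_disjoint_neq disj_gy (mem_head _ _) bQ)
  (vertex_disjoint_neq disj_gy (mem_head _ _) eQ) yg cphi bpsi epsi.
rewrite -/y -mulgA -/sg'; set a' := if g == a then y else a.
move=> a'c cphi' bpsi' epsi'.
apply: (IH sg' a' (genus0_mul_tperm G0 gy) a'c cphi' bpsi' epsi').
- exact: map_walk_contract.
- apply: map_walk_mono wQ => z _.
  exact/porbit_sub_mul_tperm/porbit_mul_tperm_merge.
apply: vertex_disjoint_sub (vertex_disjoint_mul_tperm disj_gy) => z.
rewrite {1}/walk_darts in_cons => /orP[/eqP ->|zP].
  by rewrite /a'; case: eqVneq => _; rewrite !inE eqxx ?orbT.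
by apply/mem_behead/mem_behead/sub_gP; rewrite /walk_darts inE zP orbT.
Qed.
End MapWalks.

(** * Distances in graphs *)

Section Dist.
Variables (V D : finType) (tl : D -> V) (alpha : {perm D}).
Hypothesis conG : connected_graph tl alpha.

Local Notation hd := (Defs.head tl alpha).
Local Notation adjG := (adj tl alpha).
Local Notation dst := (dist tl alpha).

Lemma adjP u v : reflect (exists g, tl g = u /\ hd g = v) (adjG u v).
Proof.
apply: (iffP existsP) => [[g /andP[/eqP <- /eqP <-]]|[g [<- <-]]]; first by exists g.
by exists g; rewrite !eqxx.
Qed.

Fixpoint gwalk (u : V) (P : seq D) (w : V) : bool :=
  if P is g :: P' then (tl g == u) && gwalk (hd g) P' w else u == w.

Definition walk_end (u : V) (P : seq D) := last u (map hd P).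

Lemma gwalk_cat u P1 P2 w :
  gwalk u (P1 ++ P2) w = gwalk u P1 (walk_end u P1) && gwalk (walk_end u P1) P2 w.
Proof.
elim: P1 u => [|g P1 IH] u /=; first by rewrite eqxx.
by rewrite IH andbA.
Qed.

Lemma gwalk_walk_end u P w : gwalk u P w -> w = walk_end u P.
Proof.
elim: P u => [|g P IH] u /=; first by move/eqP.
by case/andP => _ /IH.
Qed.

Lemma gwalk_rcons u P g w : gwalk u (rcons P g) w = gwalk u P (tl g) && (hd g == w).
Proof.
rewrite -cats1 gwalk_cat /=.
apply/andP/andP => [[h /andP[/eqP e ->]]|[h ->]]; first by rewrite e h.
by rewrite -(gwalk_walk_end h) h eqxx.
Qed.

Lemma ballP k u v :
  reflect (exists P, gwalk u P v /\ size P <= k) (v \in ball tl alpha k u).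
Proof.
elim: k v => [|k IH] v.
  rewrite /ball /= inE; apply: (iffP eqP) => [->|[[|g P] [/= /eqP]]] //.
  by exists [::]; rewrite /= eqxx.
have -> : ball tl alpha k.+1 u =
   ball tl alpha k u :|: [set y | [exists x in ball tl alpha k u, adjG x y]] by [].
rewrite in_setU inE; apply: (iffP orP).
  case=> [/IH [P [hP sP]]|/existsP[x /andP[/IH [P [hP sP]] /adjP[g [gx gv]]]]].
    by exists P; split => //; apply: leqW.
  by exists (rcons P g); rewrite gwalk_rcons size_rcons gx hP gv eqxx.
case=> P; case/lastP: P => [|P g] [hP sP].
  by left; apply/IH; exists [::].
rewrite size_rcons ltnS in sP; rewrite gwalk_rcons in hP.
case/andP: hP => hP /eqP gv.
right; apply/existsP; exists (tl g); rewrite (introT (IH _) (ex_intro _ P (conj hP sP))).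
by apply/adjP; exists g.
Qed.

Lemma gwalk_of_path u p : path adjG u p -> exists P, gwalk u P (last u p) /\ size P = size p.
Proof.
elim: p u => [|v' p IH] u /=; first by exists [::]; rewrite /= eqxx.
case/andP => /adjP[g [gu gv]] pp.
have [P [hP sP]] := IH v' pp.
by exists (g :: P); rewrite /= gu eqxx gv hP sP.
Qed.

Lemma gwalk_lt_card u v : exists P, gwalk u P v /\ size P < #|V|.
Proof.
have := conG u v; case/connectP => p pp ->; case: (shortenP pp) => p' pp' up' _.
have [P [hP sP]] := gwalk_of_path pp'.
exists P; split => //; rewrite sP.
by have := card_uniqP up'; rewrite /= => <-; apply: max_card.
Qed.

Lemma dist_lt_card u v : dst u v < #|V|.
Proof.
have [P [hP sP]] := gwalk_lt_card u v.
rewrite /dist -[X in _ < X](size_iota 0 #|V|) -has_find.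
apply/hasP; exists (size P); first by rewrite mem_iota.
by apply/ballP; exists P.
Qed.

Lemma mem_ball_dist u v : v \in ball tl alpha (dst u v) u.
Proof.
have := dist_lt_card u v; rewrite /dist -[X in _ < X](size_iota 0 #|V|) -has_find => hf.
by have := nth_find 0 hf; rewrite nth_iota // -{2}(size_iota 0 #|V|) -has_find.
Qed.

Lemma dist_le_gwalk u P v : gwalk u P v -> dst u v <= size P.
Proof.
move=> hP; case: (leqP #|V| (size P)) => sP.
  exact: leq_trans (ltnW (dist_lt_card u v)) sP.
rewrite leqNgt; apply/negP => lt.
have := before_find 0 lt; rewrite nth_iota // add0n => /negbT/negP; apply.
by apply/ballP; exists P.
Qed.

Lemma dist_gwalk u v : exists P, gwalk u P v /\ size P = dst u v.
Proof.
have /ballP [P [hP sP]] := mem_ball_dist u v.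
by exists P; split => //; apply/eqP; rewrite eqn_leq sP dist_le_gwalk.
Qed.

Lemma dist_triangle u v w : dst u w <= dst u v + dst v w.
Proof.
have [P1 [h1 s1]] := dist_gwalk u v; have [P2 [h2 s2]] := dist_gwalk v w.
rewrite -s1 -s2 -size_cat; apply: dist_le_gwalk.
by rewrite gwalk_cat -(gwalk_walk_end h1) h1.
Qed.

Lemma dist_via_walk_dart a P c z : gwalk (tl a) P (tl c) -> z \in walk_darts alpha a P c ->
  dst (tl a) (tl z) + dst (tl z) (tl c) <= size P.
Proof.
move=> hP; rewrite /walk_darts !inE mem_cat => /or3P[/eqP->|/eqP->|/orP[zP|]].
- by rewrite (leq_trans (leq_add (dist_le_gwalk (P := [::]) _) (dist_le_gwalk hP))) //= eqxx.
- by rewrite (leq_trans (leq_add (dist_le_gwalk hP) (dist_le_gwalk (P := [::]) _))) ?addn0 //= eqxx.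
- case/splitPr: P / zP hP => P1 P2.
  rewrite gwalk_cat => /andP[h1 /= /andP[/eqP e h2]].
  rewrite size_cat; apply: leq_add; first by rewrite e (dist_le_gwalk h1).
  by apply: (dist_le_gwalk (P := z :: P2)); rewrite /= eqxx h2.
- case/mapP => g gP ->{z}; case/splitPr: P / gP hP => P1 P2.
  rewrite gwalk_cat => /andP[h1 /= /andP[/eqP e h2]].
  rewrite size_cat /= -addSnnS; apply: leq_add; last exact: dist_le_gwalk h2.
  rewrite -(size_rcons P1 g); apply: dist_le_gwalk; rewrite gwalk_rcons e h1 /=.
  exact: eqxx.
Qed.

Lemma dist_le_adj u v w : adjG u v -> dst u w <= (dst v w).+1.
Proof.
move=> /adjP[g [gu gv]]; apply: leq_trans (dist_triangle u v w) _.
rewrite -add1n leq_add2r; apply: (dist_le_gwalk (P := [:: g])).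
by rewrite /= gu gv !eqxx.
Qed.
End Dist.

Section PlaneMap.
Variables (V D : finType) (tl : D -> V) (alpha sigma : {perm D}).
Hypothesis pg : plane_graph tl alpha sigma.

Local Notation hd := (Defs.head tl alpha).

Lemma alphaK : involutive alpha.
Proof. by case: pg => [[]]. Qed.

Lemma alpha_neq z : alpha z != z.
Proof. by case: pg => -[_ ->]. Qed.

Lemma tl_sigma z : tl (sigma z) = tl z.
Proof. by case: pg => -[_ _ ->]. Qed.

Lemma tl_fconnect_sigma z z' : tl z = tl z' -> fconnect sigma z z'.
Proof. by case: pg => -[_ _ _ H] _ _ _ /H. Qed.

Lemma porbit_sigma_tl u w : (w \in porbit sigma u) = (tl w == tl u).
Proof.
apply/idP/eqP => [/porbitP[i ->]|/esym/tl_fconnect_sigma]; last by rewrite porbit_fconnect.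
by rewrite permX; elim: i => //= i <-; rewrite tl_sigma.
Qed.

Lemma gwalk_map_walk a P c : gwalk tl alpha (tl a) P (tl c) -> map_walk alpha sigma a P c.
Proof.
elim: P a => [|g P IH] a /=; first by rewrite porbit_sigma_tl eq_sym.
by case/andP => ga /IH ->; rewrite porbit_sigma_tl ga.
Qed.

Lemma plane_map_connected : map_connected alpha sigma.
Proof.
case: pg => _ _ conG _.
have same z z' : tl z = tl z' -> connect (map_rel alpha sigma) z z'.
  move/tl_fconnect_sigma; apply: fconnect_sub_connect => v; by rewrite /map_rel eqxx orbT.
move=> u w; have := conG (tl u) (tl w).
case/connectP => p; elim/last_ind: p w => [|p v IH] w /=.
  by move=> _ e; apply: same; rewrite e.
rewrite rcons_path last_rcons => /andP[pp /adjP[g [gl gh]]] vw.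
apply: connect_trans (IH g pp gl) _.
apply: connect_trans (same (alpha g) w _); first by apply: connect1; rewrite /map_rel eqxx.
by rewrite vw -gh.
Qed.

Lemma ncycles_alpha : (ncycles alpha).*2 = #|D|.
Proof.
rewrite ncycles_fcard -muln2 fcard_order_set //; first exact: perm_inj.
  apply/subsetP => x _; rewrite inE /fingraph.order.
  have -> : #|fconnect alpha x| = #|[set x; alpha x]|.
    apply: eq_card => y; rewrite !inE; apply/idP/idP.
      apply: (connect_preserved (S := fun y => (y == x) || (y == alpha x))); last by rewrite eqxx.
      by move=> v v' /orP[] /eqP -> /eqP <-; rewrite ?alphaK eqxx ?orbT.
    by case/orP => /eqP ->; [exact: connect0 | exact: fconnect1].
  by rewrite cards2 (eq_sym x) alpha_neq.
Qed.

Lemma card_vertices (d : D) : #|V| = ncycles sigma.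
Proof.
case: pg => _ _ conG _.
have surj : tl @: [set: D] = [set: V].
  apply/setP => v; rewrite inE; apply/imsetP.
  have := conG (tl d) v; case/connectP => p; case/lastP: p => [|p v'] /=.
    by move=> _ ->; exists d.
  rewrite rcons_path last_rcons => /andP[_ /adjP[g [_ gh]]] ->.
  by exists (alpha g).
rewrite -cardsT -surj /ncycles porbitsT.
apply/eqP; rewrite eqn_leq; apply/andP; split; apply: leq_card_imset_coarser => u w _ _.
  by move/eqP; rewrite eq_porbit_mem porbit_sigma_tl => /eqP.
by move=> e; apply/eqP; rewrite eq_porbit_mem porbit_sigma_tl e.
Qed.

Lemma plane_genus0 (d : D) : genus0 alpha sigma.
Proof.
split; last exact: plane_map_connected.
case: pg => _ _ _ [D0|].
  have : 0 < #|D| by apply/card_gt0P; exists d.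
  by rewrite D0.
rewrite /n_faces /n_edges -(card_vertices d) -ncycles_alpha.
have -> : fcard (phi alpha sigma) D = ncycles (alpha * sigma)%g.
  by rewrite ncycles_fcard; apply: eq_fcard => z; rewrite permM.
rewrite -muln2 mulnK //; lia.
Qed.

Lemma card_darts_le : #|D| <= #|V| * #|V|.
Proof.
rewrite -card_prod; apply: (@leq_card _ _ (fun z => (tl z, hd z))).
by case: pg => _ [_ simple] _ _ z z' [tz hz]; exact: simple.
Qed.
End PlaneMap.

(** * The Monge property of distances along a face *)

Section Face.
Variables (V D : finType) (tl : D -> V) (alpha sigma : {perm D}).
Hypothesis pg : plane_graph tl alpha sigma.
Variable d : D.

Let conG : connected_graph tl alpha := let: And4 _ _ c _ := pg in c.

Local Notation hd := (Defs.head tl alpha).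
Local Notation dst := (dist tl alpha).
Local Notation len := (face_length alpha sigma d).
Local Notation ph := (phi alpha sigma).
Local Notation f j := (iter j ph d).
Local Notation vx j := (tl (f j)).

Lemma face_permE : (alpha * sigma)%g =1 ph.
Proof. by move=> z; rewrite permM. Qed.

Lemma face_dart_inj i j : i < len -> j < len -> f i = f j -> i = j.
Proof.
move=> il jl e; by rewrite -(findex_iter il) e findex_iter.
Qed.

Lemma face_dart_porbit j : f j \in porbit (alpha * sigma)%g d.
Proof. by rewrite porbit_fconnect (eq_fconnect face_permE) fconnect_iter. Qed.

Lemma face_dart_neq i j : i < len -> j < len -> i != j -> f i != f j.
Proof. by move=> il jl; apply: contra => /eqP /(face_dart_inj il jl) ->. Qed.

Lemma iter_split_face a c k j : k + j < len ->
  (forall m, k < m <= k + j -> (f m != a) && (f m != c)) ->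
  iter j (alpha * sigma * tperm a c)%g (f k) = f (k + j).
Proof.
elim: j => [|j IH] kj H; first by rewrite addn0.
rewrite iterS IH; first last.
- by move=> m /andP[km mj]; apply: H; rewrite km (leq_trans mj) // addnS.
- by rewrite (leq_trans _ kj) // addnS.
rewrite permM face_permE addnS /=.
have /andP[ha hc] : (f (k + j).+1 != a) && (f (k + j).+1 != c).
  by apply: H; rewrite addnS leqnn ltnS leq_addr.
by rewrite -iterS tpermD // eq_sym.
Qed.

Lemma split_face_porbit a c k k' : k <= k' < len ->
  (forall m, k < m <= k' -> (f m != a) && (f m != c)) ->
  f k' \in porbit (alpha * sigma * tperm a c)%g (f k).
Proof.
move=> /andP[kk' k'l] H; rewrite porbit_fconnect -(subnKC kk').
by rewrite -(iter_split_face (a := a) (c := c)) ?subnKC // fconnect_iter.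
Qed.

Lemma face_dist_monge i i' p p' : i < i' -> i' < p -> p < p' -> p' < len ->
  dst (vx i) (vx p') + dst (vx i') (vx p) <= dst (vx i) (vx p) + dst (vx i') (vx p').
Proof.
move=> ii ip pp pl.
have i'l : i' < len by lia.
have il : i < len by lia.
have pl' : p < len by lia.
have [P [hP sP]] := dist_gwalk conG (vx i) (vx p).
have [Q [hQ sQ]] := dist_gwalk conG (vx i') (vx p').
case: (boolP (has (fun z => has (fun w => tl w == tl z) (walk_darts alpha (f i') Q (f p')))
                 (walk_darts alpha (f i) P (f p)))) => H.
  case/hasP: H => z zP /hasP [w wQ /eqP ew].
  have h1 := dist_via_walk_dart conG hP zP.
  have h2 := dist_via_walk_dart conG hQ wQ; rewrite ew in h2.
  have t1 := dist_triangle conG (vx i) (tl z) (vx p').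
  have t2 := dist_triangle conG (vx i') (tl z) (vx p).
  by rewrite -sP -sQ; lia.
exfalso; apply: (@crossing _ alpha sigma (f i) (f i') (f p) (f p') P Q).
- exact: plane_genus0 pg d.
- by apply: face_dart_neq => //; lia.
- by rewrite (porbit_eq (face_dart_porbit i)) face_dart_porbit.
- apply: split_face_porbit; first by rewrite ltnW.
  by move=> m /andP[im mi]; rewrite !face_dart_neq //; lia.
- apply: split_face_porbit; first by rewrite ltnW.
  by move=> m /andP[im mi]; rewrite !face_dart_neq //; lia.
- exact: (gwalk_map_walk (a := f i) (c := f p) pg hP).
- exact: (gwalk_map_walk (a := f i') (c := f p') pg hQ).
move=> z w zP wQ; rewrite (porbit_sigma_tl pg).
move/hasPn: H => /(_ z zP) /hasPn /(_ w wQ) //.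
Qed.

Lemma face_dist_step j q :
  dst (vx j) q <= (dst (vx j.+1) q).+1 /\ dst (vx j.+1) q <= (dst (vx j) q).+1.
Proof.
have e : vx j.+1 = hd (f j) by rewrite iterS /phi (tl_sigma pg).
split; apply: (dist_le_adj conG); apply/adjP.
  by exists (f j).
by exists (alpha (f j)); rewrite /Defs.head (alphaK pg) e.
Qed.
End Face.

(** * Encoding the distance matrix *)

Fixpoint bits (w x : nat) : seq bool :=
  if w is w'.+1 then odd x :: bits w' x./2 else [::].

Definition nat_of_bits (bs : seq bool) : nat :=
  foldr (fun (b : bool) n => b + n.*2) 0 bs.

Lemma size_bits w x : size (bits w x) = w.
Proof. by elim: w x => //= w IH x; rewrite IH. Qed.

Lemma bitsK w x : x < 2 ^ w -> nat_of_bits (bits w x) = x.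
Proof.
elim: w x => [|w IH] x /=; first by rewrite expn0 ltnS leqn0 => /eqP ->.
by move=> lt; rewrite IH ?odd_double_half // ltn_half_double -mul2n -expnS.
Qed.

(* The width is written in unary in front, so the decoder need not know it. *)
Definition encode_nats (w : nat) (ns : seq nat) : seq bool :=
  nseq w true ++ false :: flatten (map (bits w) ns).

Definition decode_nat (s : seq bool) (j : nat) : nat :=
  let w := find negb s in nat_of_bits (take w (drop (j * w) (drop w.+1 s))).

Lemma size_encode_nats w ns : size (encode_nats w ns) = w.+1 + w * size ns.
Proof.
rewrite /encode_nats size_cat size_nseq /= size_flatten /shape -map_comp addnS.
congr (_ + _).+1; elim: ns => [|x ns IH] /=; first by rewrite muln0.
by rewrite size_bits IH mulnS.
Qed.

Lemma decode_encode_nat w ns j : (forall x, x \in ns -> x < 2 ^ w) -> j < size ns ->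
  decode_nat (encode_nats w ns) j = nth 0 ns j.
Proof.
move=> ns_w jns; rewrite /decode_nat /encode_nats.
rewrite find_cat has_nseq andbF size_nseq /= addn0.
rewrite -cat_rcons drop_size_cat ?size_rcons ?size_nseq //.
elim: ns j ns_w jns => [|x ns IH] [|j] ns_w //= jns.
  by rewrite drop0 take_size_cat ?size_bits // bitsK // ns_w // mem_head.
rewrite mulSnr -drop_drop drop_size_cat ?size_bits // IH //.
by move=> y yns; apply: ns_w; rewrite inE yns orbT.
Qed.

Definition pairs (g h : nat -> nat) (L : seq nat) : seq nat :=
  flatten (map (fun x => [:: g x; h x]) L).

Lemma size_pairs g h L : size (pairs g h L) = (size L).*2.
Proof. by elim: L => //= x L IH; rewrite IH doubleS. Qed.

Lemma nth_pairs g h L R j : j < size L ->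
  nth 0 (pairs g h L ++ R) j.*2 = g (nth 0 L j) /\
  nth 0 (pairs g h L ++ R) j.*2.+1 = h (nth 0 L j).
Proof. by elim: L j => [|x L IH] [|j] //= jL; apply: IH. Qed.

Lemma nth_pairs_cat g h L R k :
  nth 0 (pairs g h L ++ R) ((size L).*2 + k) = nth 0 R k.
Proof. by rewrite nth_cat size_pairs ltnNge leq_addr /= addKn. Qed.

Lemma mem_pairs g h L x :
  x \in pairs g h L -> exists2 y, y \in L & x = g y \/ x = h y.
Proof.
elim: L => [|y L IH] //=; rewrite !inE => /or3P[/eqP->|/eqP->|/IH[z zL e]].
- by exists y; [rewrite mem_head | left].
- by exists y; [rewrite mem_head | right].
- by exists z => //; rewrite inE zL orbT.
Qed.

(* Row [r + 1] of the table is row [r] lowered by one at the columns [q < T1 r]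
   and raised by one at the columns [q >= T2 r]. *)
Definition dist_table (m0 T1 T2 : nat -> nat) (l : nat) (C : seq nat) : seq nat :=
  size C :: pairs id m0 C ++ pairs T1 T2 (iota 0 l).

Definition decode_dist (s : seq bool) (i p : nat) : nat :=
  let m := decode_nat s 0 in
  let j := find (fun j => decode_nat s j.*2.+1 == p) (iota 0 m) in
  let ups := count (fun r => decode_nat s (m.*2 + r.*2).+2 <= p) (iota 0 i) in
  let downs := count (fun r => p < decode_nat s (m.*2 + r.*2).+1) (iota 0 i) in
  decode_nat s j.*2.+2 + ups - downs.

Lemma find_nth_index (C : seq nat) p : p \in C ->
  find (fun j => nth 0 C j == p) (iota 0 (size C)) = index p C.
Proof.
elim: C => [|x C IH] //=; rewrite inE; case: eqVneq => [->|xp] //= pC.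
by rewrite -[1]addn0 iotaDl find_map /preim /= IH.
Qed.

Lemma decode_dist_table m0 T1 T2 l w C i p :
  uniq C -> p \in C -> i <= l ->
  (forall x, x \in dist_table m0 T1 T2 l C -> x < 2 ^ w) ->
  decode_dist (encode_nats w (dist_table m0 T1 T2 l C)) i p =
  m0 p + count (fun r => T2 r <= p) (iota 0 i) - count (fun r => p < T1 r) (iota 0 i).
Proof.
move=> uC pC il tw; set ns := dist_table _ _ _ _ _.
have sz : size ns = (size C + l).*2.+1 by rewrite /= size_cat !size_pairs size_iota doubleD.
have decE j : j < size ns -> decode_nat (encode_nats w ns) j = nth 0 ns j.
  exact: decode_encode_nat.
have pi : index p C < size C by rewrite index_mem.
have d0 : decode_nat (encode_nats w ns) 0 = size C by rewrite decE ?sz.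
rewrite /decode_dist d0.
have -> : find (fun j => decode_nat (encode_nats w ns) j.*2.+1 == p) (iota 0 (size C))
          = index p C.
  rewrite -find_nth_index //; apply: eq_in_find => j; rewrite mem_iota add0n => jC.
  rewrite decE; last by rewrite sz ltnS ltn_double (leq_trans jC) // leq_addr.
  by rewrite /= (nth_pairs _ _ _ jC).1.
rewrite decE; last by rewrite sz ltnS ltn_Sdouble (leq_trans pi) // leq_addr.
rewrite /= (nth_pairs _ _ _ pi).2 nth_index //.
have TE r : r < i ->
    decode_nat (encode_nats w ns) ((size C).*2 + r.*2).+1 = T1 r /\
    decode_nat (encode_nats w ns) ((size C).*2 + r.*2).+2 = T2 r.
  move=> ri; have rl : r < l by apply: leq_trans il.
  have lt1 : ((size C).*2 + r.*2).+1 < size ns by rewrite sz; lia.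
  have lt2 : ((size C).*2 + r.*2).+2 < size ns by rewrite sz; lia.
  rewrite !decE //.
  rewrite /= -!addnS !nth_pairs_cat.
  have rl' : r < size (iota 0 l) by rewrite size_iota.
  by have := nth_pairs T1 T2 [::] rl'; rewrite cats0 nth_iota.
congr (_ + _ - _); apply: eq_in_count => r; rewrite mem_iota add0n => ri.
  by rewrite (TE r ri).2.
by rewrite (TE r ri).1.
Qed.

Lemma foldr_minn_le (L : seq nat) b x : x \in L -> foldr minn b L <= x.
Proof.
elim: L => //= y L IH; rewrite inE => /orP[/eqP->|/IH h]; first exact: geq_minl.
exact: leq_trans (geq_minr _ _) h.
Qed.

Lemma foldr_minn_mem (L : seq nat) b : foldr minn b L = b \/ foldr minn b L \in L.
Proof.
elim: L => [|y L IH]; first by left.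
rewrite [foldr _ _ _]/= /minn; case: ltnP => _; first by right; rewrite mem_head.
by case: IH => [->|h]; [left | right; rewrite inE h orbT].
Qed.

Lemma foldr_minn_le_init (L : seq nat) b : foldr minn b L <= b.
Proof. by elim: L => //= y L IH; exact: leq_trans (geq_minr _ _) IH. Qed.

Lemma prefix_threshold (P : pred nat) (C : seq nat) b :
  (forall q, q \in C -> q < b) ->
  (forall q q', q \in C -> q' \in C -> q < q' -> P q' -> P q) ->
  {in C, forall q, P q = (q < foldr minn b [seq q <- C | ~~ P q])}.
Proof.
move=> C_lt Pdown q qC; case: (boolP (P q)) => Pq; last first.
  by apply/esym/negbTE; rewrite -leqNgt; apply: foldr_minn_le; rewrite mem_filter Pq.
apply/esym; rewrite ltnNge; apply/negP => Tq.
case: (foldr_minn_mem [seq q <- C | ~~ P q] b) => [Tb|].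
  by move: Tq; rewrite Tb leqNgt C_lt.
set T := foldr _ _ _ in Tq *; rewrite mem_filter => /andP[nPT TC].
move: Tq; rewrite leq_eqVlt => /orP[/eqP Tq|Tq]; first by rewrite Tq Pq in nPT.
by rewrite (Pdown _ _ TC qC Tq Pq) in nPT.
Qed.

Lemma suffix_threshold (P : pred nat) (C : seq nat) b :
  (forall q, q \in C -> q < b) ->
  (forall q q', q \in C -> q' \in C -> q < q' -> P q -> P q') ->
  {in C, forall q, P q = (foldr minn b [seq q <- C | P q] <= q)}.
Proof.
move=> C_lt Pup q qC; apply/esym; rewrite leqNgt.
rewrite -(eq_filter (fun q => negbK (P q))) -(@prefix_threshold (predC P) C b) ?negbK //.
by move=> x y xC yC xy; apply: contra; apply: Pup.
Qed.

Lemma unit_steps_count (M : nat -> nat -> nat) q i :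
  (forall r, r < i -> M r q <= (M r.+1 q).+1 /\ M r.+1 q <= (M r q).+1) ->
  M i q + count (fun r => M r.+1 q < M r q) (iota 0 i) =
  M 0 q + count (fun r => M r q < M r.+1 q) (iota 0 i).
Proof.
elim: i => [|i IH] step; first by rewrite /= !addn0.
rewrite -[in iota _ i.+1]addn1 iotaD !count_cat /= !addn0 add0n.
have := IH (fun r ri => step r (leqW ri)); have [] := step i (ltnSn i).
by case: (ltngtP (M i.+1 q) (M i q)) => /=; lia.
Qed.

Lemma monge_encoding (M : nat -> nat -> nat) l len w (C : seq nat) :
  uniq C -> (forall q, q \in C -> q < len) -> len < 2 ^ w ->
  (forall q, q \in C -> M 0 q < 2 ^ w) ->
  (forall r q, r.+1 < l -> q \in C ->
     M r q <= (M r.+1 q).+1 /\ M r.+1 q <= (M r q).+1) ->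
  (forall r q q', r.+1 < l -> q \in C -> q' \in C -> q < q' ->
     M r q' + M r.+1 q <= M r q + M r.+1 q') ->
  exists2 s, size s = w.+1 + w * (size C + l).*2.+1 &
    forall i p, i < l -> p \in C -> decode_dist s i p = M i p.
Proof.
move=> uC C_len len_w M0_w step monge.
pose T1 r := foldr minn len [seq q <- C | ~~ (M r.+1 q < M r q)].
pose T2 r := foldr minn len [seq q <- C | M r q < M r.+1 q].
have T1E r : r.+1 < l -> {in C, forall q, (M r.+1 q < M r q) = (q < T1 r)}.
  move=> rl; apply: prefix_threshold => // q q' qC q'C qq'.
  by have := monge r q q' rl qC q'C qq'; lia.
have T2E r : r.+1 < l -> {in C, forall q, (M r q < M r.+1 q) = (T2 r <= q)}.
  move=> rl; apply: suffix_threshold => // q q' qC q'C qq'.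
  by have := monge r q q' rl qC q'C qq'; lia.
have C_len' : size C <= len.
  rewrite -(size_iota 0 len); apply: uniq_leq_size => // q qC.
  by rewrite mem_iota add0n C_len.
set ns := dist_table (M 0) T1 T2 l C.
have ns_w x : x \in ns -> x < 2 ^ w.
  rewrite inE mem_cat => /or3P[/eqP->|/mem_pairs[y yC [->|->]]|/mem_pairs[y _ [->|->]]].
  - exact: leq_ltn_trans C_len' len_w.
  - exact: ltn_trans (C_len _ yC) len_w.
  - exact: M0_w.
  - exact: leq_ltn_trans (foldr_minn_le_init _ _) len_w.
  - exact: leq_ltn_trans (foldr_minn_le_init _ _) len_w.
exists (encode_nats w ns).
  by rewrite size_encode_nats /= size_cat !size_pairs size_iota doubleD.
move=> i p il pC; rewrite decode_dist_table ?(ltnW il) //.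
have rl r : r \in iota 0 i -> r.+1 < l.
  by rewrite mem_iota add0n => ri; apply: leq_ltn_trans ri il.
rewrite (eq_in_count (a2 := fun r => M r p < M r.+1 p)); last first.
  by move=> r /rl rl'; rewrite T2E.
rewrite (eq_in_count (a1 := fun r => p < T1 r) (a2 := fun r => M r.+1 p < M r p)); last first.
  by move=> r /rl rl'; rewrite T1E.
rewrite -unit_steps_count ?addnK // => r ri.
exact: step (leq_ltn_trans ri il) pC.
Qed.

Theorem lemma1 :
  exists (c k : nat) (dec : seq bool -> nat -> nat -> nat),
  forall (V D : finType) (tl : D -> V) (alpha sigma : {perm D}),
    plane_graph tl alpha sigma ->
  forall (d : D) (l : nat) (C2' : seq nat),
    l <= face_length alpha sigma d ->
    uniq C2' ->
    (forall p, p \in C2' -> l <= p < face_length alpha sigma d) ->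
  exists s : seq bool,
    size s <= c * (l + size C2') * (trunc_log 2 #|V|).+1 ^ k /\
    (forall i p, i < l -> p \in C2' ->
       dec s i p = dist tl alpha (face_vertex tl alpha sigma d i)
                                 (face_vertex tl alpha sigma d p)).
Proof.
exists 9, 1, decode_dist => V D tl alpha sigma pg d l C2' _ uC C2'_face.
have [-> | l_gt0] := posnP l; first by exists [::]; split => // i p; rewrite ltn0.
set t := trunc_log 2 #|V|; pose w := t.+1.*2.
have V_lt : #|V| < 2 ^ t.+1 by apply: trunc_log_ltn.
have sq_w : #|V| * #|V| < 2 ^ w by rewrite /w -addnn expnD ltn_mul.
have len_w : face_length alpha sigma d < 2 ^ w.
  exact: leq_ltn_trans (max_card _) (leq_ltn_trans (card_darts_le pg) sq_w).
have conG : connected_graph tl alpha by case: pg.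
have dist_w u v : dist tl alpha u v < 2 ^ w.
  by apply: leq_ltn_trans _ sq_w; have := dist_lt_card conG u v; nia.
pose vx i := face_vertex tl alpha sigma d i.
have [s size_s dec_s] : exists2 s, size s = w.+1 + w * (size C2' + l).*2.+1 &
    forall i p, i < l -> p \in C2' -> decode_dist s i p = dist tl alpha (vx i) (vx p).
  apply: (monge_encoding (M := fun i q => dist tl alpha (vx i) (vx q))
                         (len := face_length alpha sigma d)) => //.
  - by move=> q /C2'_face /andP[].
  - by move=> r q _ _; apply: face_dist_step.
  - move=> r q q' rl /C2'_face /andP[lq _] /C2'_face /andP[_ q'len] qq'.
    by have := face_dist_monge pg (ltnSn r) (leq_trans rl lq) qq' q'len.
exists s; split=> //; rewrite size_s expn1 /w.
by nia.
Qed.
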